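(* Let $K$ be a matrix convex set in $h$ self-adjoint variables that equals the matrix convex hull of its free extreme points, let $g<h$, and let $X\in\mathcal P_gK(n)$ be a free extreme point of $\mathcal P_gK$. Then either there is $Y$ with $(X,Y)$ a free extreme point of $K$, or there exist $Z\in\mathcal P_gK$ and $Y$ such that $(X\oplus Z,Y)$ is a free extreme point of $K$.
   Context: A matrix convex set $K$ is a graded set of self-adjoint tuples closed under matrix convex combinations $\sum_iV_i^*X^{(i)}V_i$ with $\sum_iV_i^*V_i=I$; $\mathrm{mconv}(S)$ is the smallest matrix convex set containing $S$ (no closure). A point $X\in K(n)$ is a free extreme point of $K$ if whenever $X=\sum_iV_i^*X^{(i)}V_i$ is a matrix convex combination of points of $K$ with all $V_i\ne0$, each $X^{(i)}$ is unitarily equivalent to $X$ or to $X\oplus Z$ for some $Z\in K$; equivalently $X$ is irreducible and has only trivial dilations in $K$. $\mathcal P_gK$ is the set of $X$ with $(X,Y)\in K$ for some $Y$ of the same size. *)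

From mathcomp Require Import all_boot all_algebra.
From mathcomp Require Import reals complex.
Set Implicit Arguments. Unset Strict Implicit. Unset Printing Implicit Defensive.
Import GRing.Theory Num.Theory.
Local Open Scope ring_scope.

Section MatrixConvex.
Variable C : numClosedFieldType.

Definition adj m n (A : 'M[C]_(m, n)) : 'M[C]_(n, m) := (map_mx Num.conj A)^T.

Definition mtuple (h n : nat) := 'I_h -> 'M[C]_n.

Definition selfadj h n (X : mtuple h n) : Prop := forall j, adj (X j) = X j.

(* graded set: a set of h-tuples at every level n (only levels n >= 1 matter) *)
Definition gset (h : nat) := forall n : nat, mtuple h n -> Prop.

Definition mcomb h n k (m : 'I_k -> nat) (Xs : forall i, mtuple h (m i))
  (V : forall i, 'M[C]_(m i, n)) : mtuple h n :=
  fun j => \sum_(i < k) (adj (V i) *m Xs i j *m V i).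

Definition isometric_family n k (m : 'I_k -> nat) (V : forall i, 'M[C]_(m i, n)) : Prop :=
  \sum_(i < k) (adj (V i) *m V i) = 1%:M.

Definition matrix_convex h (K : gset h) : Prop :=
  (forall n (X : mtuple h n), (0 < n)%N -> K n X -> selfadj X) /\
  (forall n k (m : 'I_k -> nat) (Xs : forall i, mtuple h (m i))
          (V : forall i, 'M[C]_(m i, n)),
     (0 < n)%N -> (forall i, 0 < m i)%N -> (forall i, K (m i) (Xs i)) ->
     isometric_family V -> K n (mcomb Xs V)).

(* smallest matrix convex set containing S (no closure) *)
Definition mconv h (S : gset h) : gset h :=
  fun n X => forall K : gset h, matrix_convex K ->
    (forall p (Y : mtuple h p), (0 < p)%N -> S p Y -> K p Y) -> K n X.

Definition dsum h n p (X : mtuple h n) (Z : mtuple h p) : mtuple h (n + p) :=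
  fun j => block_mx (X j) 0 0 (Z j).

(* unitary equivalence (forces equal sizes) *)
Definition unieq h m n (A : mtuple h m) (B : mtuple h n) : Prop :=
  exists U : 'M[C]_(m, n),
    adj U *m U = 1%:M /\ U *m adj U = 1%:M /\ forall j, A j = U *m B j *m adj U.

Definition free_extreme h (K : gset h) n (X : mtuple h n) : Prop :=
  (0 < n)%N /\ K n X /\
  forall k (m : 'I_k -> nat) (Xs : forall i, mtuple h (m i))
         (V : forall i, 'M[C]_(m i, n)),
    (forall i, 0 < m i)%N -> (forall i, K (m i) (Xs i)) ->
    (forall i, V i != 0) -> isometric_family V -> X = mcomb Xs V ->
    forall i, unieq (Xs i) X \/
      exists p (Z : mtuple h p), (0 < p)%N /\ K p Z /\ unieq (Xs i) (dsum X Z).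

Definition free_ext_set h (K : gset h) : gset h := fun n X => free_extreme K X.

(* the pair (X, Y): first g coordinates X, remaining h - g coordinates Y *)
Definition pairT g h n (X : mtuple g n) (Y : mtuple (h - g) n) : mtuple h n :=
  fun j => match (insub (nat_of_ord j) : option 'I_g) with
           | Some a => X a
           | None => match (insub (nat_of_ord j - g)%N : option 'I_(h - g)) with
                     | Some b => Y b
                     | None => 0
                     end
           end.

Definition proj g h (K : gset h) : gset g :=
  fun n X => exists Y : mtuple (h - g) n, K n (pairT X Y).

End MatrixConvex.

Arguments mconv {C h} S n X.
Arguments free_ext_set {C h} K n X.
Arguments proj {C} g {h} K n X.
Arguments free_extreme {C h} K {n} X.

From mathcomp Require Import all_boot all_algebra.
From mathcomp Require Import reals complex.
From mathcomp Require Import zify.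
From Stdlib Require Import Classical FunctionalExtensionality.
Set Implicit Arguments. Unset Strict Implicit. Unset Printing Implicit Defensive.
Import GRing.Theory Num.Theory.
Local Open Scope ring_scope.

(* Suppose no such lift exists and let K' be the set of W in K such that X is
   not a compression V^* (P_g W) V of the first g coordinates of W.
   - Every free extreme point E of K lies in K': if X compresses P_g E, then,
     X being free extreme in P_g K, P_g E is unitarily equivalent to X or to
     X (+) Z; conjugating E by that unitary gives a free extreme point of K
     of the form (X, Y) or (X (+) Z, Y).
   - K' is matrix convex: if X compresses P_g (sum_i V_i^* W_i V_i), then X
     is a matrix convex combination of the P_g W_i, so by free extremality
     some P_g W_i is unitarily equivalent to X or to X (+) Z, and X
     compresses it.
   Hence K = mconv (free extreme points of K) is contained in K', which is
   absurd since X compresses P_g (X, Y) = X for any (X, Y) in K. *)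

Section MatrixConvexity.
Variable C : numClosedFieldType.

Lemma adjM m n p (A : 'M[C]_(m, n)) (B : 'M[C]_(n, p)) : adj (A *m B) = adj B *m adj A.
Proof. by rewrite /adj map_mxM trmx_mul. Qed.

Lemma adjK m n (A : 'M[C]_(m, n)) : adj (adj A) = A.
Proof. by apply/matrixP=> i j; rewrite /adj !mxE conjCK. Qed.

Lemma adj0 m n : adj (0 : 'M[C]_(m, n)) = 0.
Proof. by apply/matrixP=> i j; rewrite /adj !mxE rmorph0. Qed.

Lemma adj1 n : adj (1%:M : 'M[C]_n) = 1%:M.
Proof. by apply/matrixP=> i j; rewrite /adj !mxE conjC_nat eq_sym. Qed.

Lemma adj_block m1 m2 n1 n2 (A : 'M[C]_(m1, n1)) (B : 'M[C]_(m1, n2))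
    (D : 'M[C]_(m2, n1)) (E : 'M[C]_(m2, n2)) :
  adj (block_mx A B D E) = block_mx (adj A) (adj D) (adj B) (adj E).
Proof. by rewrite /adj map_block_mx tr_block_mx. Qed.

Lemma adj_col m1 m2 n (A : 'M[C]_(m1, n)) (B : 'M[C]_(m2, n)) :
  adj (col_mx A B) = row_mx (adj A) (adj B).
Proof. by rewrite /adj map_col_mx tr_col_mx. Qed.

Lemma scalar1_neq0 n : (0 < n)%N -> (1%:M : 'M[C]_n) != 0.
Proof.
case: n => // n _; apply/eqP => /matrixP /(_ ord0 ord0).
by rewrite !mxE eqxx /= => /eqP; rewrite oner_eq0.
Qed.

Lemma mulmx_isometry m n (W : 'M[C]_(m, n)) (A : 'M[C]_n) :
  adj W *m W = 1%:M -> adj W *m (W *m A *m adj W) *m W = A.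
Proof. by move=> WW; rewrite !mulmxA WW mul1mx -mulmxA WW mulmx1. Qed.

Section Families.
Variables (h k : nat) (m : 'I_k -> nat).
Implicit Types (Xs : forall i, mtuple C h (m i)).

Lemma mcomb_compress n q Xs (V : forall i, 'M[C]_(m i, n)) (W : 'M[C]_(n, q)) j :
  adj W *m mcomb Xs V j *m W = mcomb Xs (fun i => V i *m W) j.
Proof.
rewrite /mcomb mulmx_sumr mulmx_suml; apply: eq_bigr => i _.
by rewrite adjM !mulmxA.
Qed.

Lemma isometric_family_compress n q (V : forall i, 'M[C]_(m i, n)) (W : 'M[C]_(n, q)) :
  isometric_family V -> adj W *m W = 1%:M -> isometric_family (fun i => V i *m W).
Proof.
rewrite /isometric_family => HV HW.
under eq_bigr => i _ do rewrite adjM -mulmxA [_ *m (_ *m W)]mulmxA.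
by rewrite -mulmx_sumr -mulmx_suml HV mul1mx.
Qed.

Lemma isometric_family_nonzero n (V : forall i, 'M[C]_(m i, n)) :
  (0 < n)%N -> isometric_family V -> exists i, V i != 0.
Proof.
move=> n0 HV; apply: NNPP => allV0; move: (scalar1_neq0 n0).
rewrite -HV big1 ?eqxx // => i _.
have /eqP -> : V i == 0 by apply/negPn/negP => Vi; apply: allV0; exists i.
by rewrite adj0 mul0mx.
Qed.
End Families.

Lemma unieq_sym h m n (A : mtuple C h m) (B : mtuple C h n) : unieq A B -> unieq B A.
Proof.
case=> U [UU [UU' AU]]; exists (adj U); rewrite adjK; split=> //; split=> // j.
by rewrite AU mulmx_isometry.
Qed.

Lemma unieq_trans h m n q (A : mtuple C h m) (B : mtuple C h n) (D : mtuple C h q) :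
  unieq A B -> unieq B D -> unieq A D.
Proof.
case=> U [UU [UU' AU]] [W [WW [WW' BW]]]; exists (U *m W); rewrite adjM.
split; last split.
- by rewrite -mulmxA (mulmxA (adj U)) UU mul1mx WW.
- by rewrite -mulmxA (mulmxA W) WW' mul1mx UU'.
- by move=> j; rewrite AU BW !mulmxA.
Qed.

Lemma unieq_dsum h m n p (A : mtuple C h m) (B : mtuple C h n) (Z : mtuple C h p) :
  unieq A B -> unieq (dsum A Z) (dsum B Z).
Proof.
case=> U [UU [UU' AU]]; exists (block_mx U 0 0 1%:M).
rewrite adj_block !adj0 adj1 !mulmx_block.
rewrite !(mul0mx, mulmx0, addr0, add0r, mul1mx, mulmx1) UU UU' -!scalar_mx_block.
split=> //; split=> // j.
by rewrite /dsum !mulmx_block !(mul0mx, mulmx0, addr0, add0r, mul1mx, mulmx1) AU.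
Qed.

Lemma free_extreme_unieq h (L : gset C h) q m (F : mtuple C h q) (E : mtuple C h m) :
  matrix_convex L -> (0 < q)%N -> unieq F E -> free_extreme L E -> free_extreme L F.
Proof.
move=> HL q0 FE [m0 [LE extE]]; have [U [UU [UU' FU]]] := FE.
have EF := unieq_sym FE.
split => //; split.
  have -> : F = mcomb (k:=1) (m:=fun _ => m) (fun _ => E) (fun _ => adj U).
    by apply: functional_extensionality => j; rewrite /mcomb big_ord1 adjK FU.
  by apply: HL.2 => //; rewrite /isometric_family big_ord1 adjK.
move=> k mm Xs V mpos LXs V0 HV defF i.
have defE : E = mcomb Xs (fun i => V i *m U).
  apply: functional_extensionality => j.
  by rewrite -mcomb_compress -defF FU mulmx_isometry.
have VU0 i' : V i' *m U != 0.
  apply/eqP => VU0; move/eqP: (V0 i'); apply.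
  by rewrite -[V i']mulmx1 -UU' mulmxA VU0 mul0mx.
have [XE | [p [Z [p0 [LZ XEZ]]]]] :=
  extE k mm Xs _ mpos LXs VU0 (isometric_family_compress HV UU) defE i.
  by left; apply: unieq_trans XE EF.
by right; exists p, Z; split=> //; split=> //; apply: unieq_trans XEZ (unieq_dsum Z EF).
Qed.

(* Free extremality only speaks about combinations with all V i != 0; the
   zero terms can be dropped, so it constrains every nonzero term. *)
Lemma free_extreme_mcomb h (L : gset C h) n (X : mtuple C h n) k (m : 'I_k -> nat)
    (Xs : forall i, mtuple C h (m i)) (V : forall i, 'M[C]_(m i, n)) :
  free_extreme L X -> (forall i, 0 < m i)%N -> (forall i, L (m i) (Xs i)) ->
  isometric_family V -> X = mcomb Xs V -> forall i, V i != 0 ->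
  unieq (Xs i) X \/
  exists p (Z : mtuple C h p), (0 < p)%N /\ L p Z /\ unieq (Xs i) (dsum X Z).
Proof.
move=> [_ [_ extX]] mpos LXs HV defX i Vi.
pose S := [set i | V i != 0].
have sum_S (F : 'I_k -> 'M[C]_n) : (forall i, V i = 0 -> F i = 0) ->
    \sum_(i' < #|S|) F (enum_val i') = \sum_i F i.
  move=> F0; rewrite -big_enum_val /= [RHS](bigID (mem S)) /=.
  rewrite [X in _ = _ + X]big1 ?addr0 //.
  by move=> i'; rewrite inE negbK => /eqP /F0.
have Si : i \in S by rewrite inE.
have VS (i' : 'I_#|S|) : V (enum_val i') != 0.
  by have := enum_valP i'; rewrite inE.
have := extX #|S| (fun i' => m (enum_val i')) (fun i' => Xs (enum_val i'))
  (fun i' => V (enum_val i')) (fun _ => mpos _) (fun _ => LXs _)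
  VS _ _ (enum_rank_in Si i).
rewrite enum_rankK_in //; apply.
  rewrite /isometric_family (sum_S (fun i => adj (V i) *m V i)) ?HV // => i' ->.
  by rewrite adj0 mul0mx.
apply: functional_extensionality => j.
rewrite defX /mcomb (sum_S (fun i => adj (V i) *m Xs i j *m V i)) // => i' ->.
by rewrite adj0 !mul0mx.
Qed.

Definition compression h n m (X : mtuple C h n) (A : mtuple C h m) : Prop :=
  exists V : 'M[C]_(m, n), adj V *m V = 1%:M /\ forall j, X j = adj V *m A j *m V.

Lemma unieq_compression h n m (X : mtuple C h n) (A : mtuple C h m) :
  unieq A X -> compression X A.
Proof.
case/unieq_sym=> W [_ [WW' XW]]; exists (adj W); rewrite adjK.
by split=> // j; rewrite XW.
Qed.

Lemma unieq_dsum_compression h n m p (X : mtuple C h n) (Z : mtuple C h p)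
    (A : mtuple C h m) :
  unieq A (dsum X Z) -> compression X A.
Proof.
case=> W [WW [_ AW]]; exists (W *m col_mx 1%:M 0).
rewrite adjM adj_col adj1 adj0; split.
  by rewrite -mulmxA (mulmxA (adj W)) WW mul1mx mul_row_col mul1mx mul0mx addr0.
move=> j; rewrite AW /dsum -!mulmxA (mulmxA (adj W)) WW mul1mx !mulmxA.
rewrite -(mulmxA _ (adj W)) WW mulmx1 mul_row_block.
by rewrite !(mul0mx, mulmx0, addr0, add0r, mul1mx, mulmx1) mul_row_col mulmx1 mulmx0 addr0.
Qed.

Section Projection.
Variables (g h : nat) (Hgh : (g < h)%N).

Definition projX m (W : mtuple C h m) : mtuple C g m :=
  fun a => W (widen_ord (ltnW Hgh) a).

Lemma projY_subproof (b : 'I_(h - g)) : (g + b < h)%N.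
Proof. by rewrite -ltn_subRL. Qed.

Definition projY m (W : mtuple C h m) : mtuple C (h - g) m :=
  fun b => W (Ordinal (projY_subproof b)).

Lemma pairT_proj m (W : mtuple C h m) : pairT (projX W) (projY W) = W.
Proof.
apply: functional_extensionality => j; rewrite /pairT.
case: insubP => [a _ ja | /negbTE jg].
  by rewrite /projX; congr W; apply: val_inj.
case: insubP => [b _ jb | /negP jhg].
  by rewrite /projY; congr W; apply: val_inj => /=; rewrite jb; move: jg; lia.
by exfalso; apply: jhg; have := ltn_ord j; move: jg; lia.
Qed.

Lemma projX_pairT m (X : mtuple C g m) (Y : mtuple C (h - g) m) :
  projX (pairT X Y) = X.
Proof.
apply: functional_extensionality => a; rewrite /projX /pairT.
case: insubP => [a' _ aa' | ]; first by congr X; apply: val_inj.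
by rewrite /= ltn_ord.
Qed.

Lemma proj_projX (K : gset C h) m (W : mtuple C h m) : K m W -> proj g K m (projX W).
Proof. by exists (projY W); rewrite pairT_proj. Qed.

Lemma unieq_projX_lift n m (X : mtuple C g n) (E : mtuple C h m) :
  unieq (projX E) X -> exists Y, unieq (pairT X Y) E.
Proof.
case/unieq_sym=> U [UU [UU' XU]].
pose F : mtuple C h n := fun j => U *m E j *m adj U.
have <- : projX F = X by apply: functional_extensionality => a; rewrite XU.
by exists (projY F); rewrite pairT_proj; exists U.
Qed.

Lemma free_extreme_lift (K : gset C h) n (X : mtuple C g n) m (E : mtuple C h m) :
  matrix_convex K -> free_extreme (proj g K) X -> free_extreme K E ->
  compression X (projX E) ->
  (exists Y, free_extreme K (pairT X Y)) \/
  exists p (Z : mtuple C g p) (Y : mtuple C (h - g) (n + p)),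
    (0 < p)%N /\ proj g K p Z /\ free_extreme K (pairT (dsum X Z) Y).
Proof.
move=> HK HX HE [V [VV XV]]; have [n0 _] := HX; have [m0 [KE _]] := HE.
have iso : isometric_family (k:=1) (m:=fun _ => m) (fun _ => V).
  by rewrite /isometric_family big_ord1.
have [i Vi] := isometric_family_nonzero n0 iso.
have defX : X = mcomb (k:=1) (m:=fun _ => m) (fun _ => projX E) (fun _ => V).
  by apply: functional_extensionality => a; rewrite /mcomb big_ord1 XV.
have [EX | [p [Z [p0 [PZ EXZ]]]]] :=
  free_extreme_mcomb (i:=i) HX (fun _ => m0) (fun _ => proj_projX KE) iso defX Vi.
  left; have [Y FE] := unieq_projX_lift EX.
  by exists Y; apply: free_extreme_unieq HK n0 FE HE.
right; have [Y FE] := unieq_projX_lift EXZ; exists p, Z, Y; split=> //; split=> //.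
by apply: free_extreme_unieq HK _ FE HE; rewrite addn_gt0 n0.
Qed.

Definition compression_avoiding (K : gset C h) n (X : mtuple C g n)
    p (W : mtuple C h p) : Prop :=
  K p W /\ ~ compression X (projX W).

Lemma matrix_convex_compression_avoiding (K : gset C h) n (X : mtuple C g n) :
  matrix_convex K -> free_extreme (proj g K) X ->
  matrix_convex (compression_avoiding K X).
Proof.
move=> HK HX; have [n0 _] := HX.
split; first by move=> m W m0 [KW _]; apply: HK.1 m0 KW.
move=> n' k m Ws V n'0 mpos KWs HV; split.
  by apply: HK.2 => // i; apply: (KWs i).1.
case=> Vc [VcVc XVc].
have iso := isometric_family_compress HV VcVc.
have [i Vi] := isometric_family_nonzero n0 iso.
have defX : X = mcomb (fun i => projX (Ws i)) (fun i => V i *m Vc).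
  by apply: functional_extensionality => a; rewrite XVc /projX mcomb_compress.
apply: (KWs i).2.
have [|[p [Z [_ [_]]]]] :=
  free_extreme_mcomb (i:=i) HX mpos (fun i => proj_projX (KWs i).1) iso defX Vi.
  exact: unieq_compression.
exact: unieq_dsum_compression.
Qed.

End Projection.

End MatrixConvexity.

Theorem mainTheorem14 (R : realType) (h g : nat) (K : gset R[i] h)
  (HK : matrix_convex K)
  (Hhull : forall n (W : mtuple R[i] h n), (0 < n)%N ->
             (K n W <-> mconv (free_ext_set K) n W))
  (Hgh : (g < h)%N) (n : nat) (X : mtuple R[i] g n)
  (HX : free_extreme (proj g K) X) :
  (exists Y : mtuple R[i] (h - g) n, free_extreme K (pairT X Y)) \/
  (exists (p : nat) (Z : mtuple R[i] g p) (Y : mtuple R[i] (h - g) (n + p)),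
      (0 < p)%N /\ proj g K p Z /\ free_extreme K (pairT (dsum X Z) Y)).
Proof.
apply: NNPP => noLift.
have [n0 [[Y KXY] _]] := HX.
have ext_avoiding p (W : mtuple R[i] h p) :
    (0 < p)%N -> free_ext_set K p W -> compression_avoiding Hgh K X W.
  move=> _ EW; split; first exact: EW.2.1.
  by move=> XW; apply: noLift; apply: free_extreme_lift HK HX EW XW.
have [_] := proj1 (Hhull n _ n0) KXY _
  (matrix_convex_compression_avoiding Hgh HK HX) ext_avoiding.
apply; exists 1%:M; split=> [|a]; first by rewrite adj1 mul1mx.
by rewrite adj1 mul1mx mulmx1 projX_pairT.
Qed.
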